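(* For every fixed $\theta\in\mathbb R$, the map $\tau\mapsto s_1(\theta,\tau)=\mathbb E[Q\mid\Theta=\theta,A(\tau)=1]$ is strictly increasing on $(-x_u,x_q)$.
   Context: Setup. Let $Q\in\{0,1\}$ be a random variable with $\mathbb P(Q=1)=\pi\in(0,1)$, and let $(\Theta,\Gamma)$ be a real-valued random vector whose conditional joint density given $Q=1$ is $h_q(\theta,\gamma)$ and given $Q=0$ is $h_u(\theta,\gamma)$, both strictly positive on $\mathbb R^2$. Monotone likelihood ratio assumption: $l(\theta,\gamma)=h_q(\theta,\gamma)/h_u(\theta,\gamma)$ is continuous and strictly increasing in each of $\theta$ and $\gamma$, and for each $\theta$ the map $\gamma\mapsto l(\theta,\gamma)$ has infimum $0$ and supremum $+\infty$. Fix payoffs $x_q>0$, $x_u>0$. For $\tau\in(-x_u,x_q)$ let $A(\tau)=\mathbb 1\{l(\Theta,\Gamma)>\frac{(1-\pi)(x_u+\tau)}{\pi(x_q-\tau)}\}$. Define $s_1(\theta,\tau)=\mathbb E[Q\mid\Theta=\theta,A(\tau)=1]$. *)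

From HB Require Import structures.
From mathcomp Require Import all_boot all_order all_algebra.
From mathcomp Require Import all_classical all_reals all_analysis.
Set Implicit Arguments. Unset Strict Implicit. Unset Printing Implicit Defensive.
Import Order.TTheory GRing.Theory Num.Theory.
Import numFieldNormedType.Exports.
Local Open Scope classical_set_scope.
Local Open Scope ring_scope.

Section Defs.
Variable R : realType.

Definition lr (hq hu : R -> R -> R) (th g : R) : R := hq th g / hu th g.

Definition thresh (pi xq xu tau : R) : R :=
  ((1 - pi) * (xu + tau)) / (pi * (xq - tau)).

(* the gamma-section {gamma | A(tau)=1} at Theta = theta *)
Definition accept_set (hq hu : R -> R -> R) (pi xq xu th tau : R) : set R :=
  [set g | thresh pi xq xu tau < lr hq hu th g].

(* s_1(theta,tau) = E[Q | Theta = theta, A(tau) = 1], computed by Bayes'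
   rule from the conditional densities:
     P(Q=1, Theta in dtheta, A(tau)=1) = pi * (int_{A-section} h_q(theta,g) dg) dtheta
     P(Q=0, Theta in dtheta, A(tau)=1) = (1-pi) * (int_{A-section} h_u(theta,g) dg) dtheta *)
Definition s1 (hq hu : R -> R -> R) (pi xq xu th tau : R) : R :=
  let D := accept_set hq hu pi xq xu th tau in
  let Iq := Rintegral (@lebesgue_measure R) D (hq th) in
  let Iu := Rintegral (@lebesgue_measure R) D (hu th) in
  (pi * Iq) / (pi * Iq + (1 - pi) * Iu).

Definition joint_density (h : R -> R -> R) : Prop :=
  (forall th g, 0 < h th g) /\
  measurable_fun setT (fun p : R * R => h p.1 p.2) /\
  (\int[(@lebesgue_measure R \x @lebesgue_measure R)%E]_p (h p.1 p.2)%:E = 1)%E.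

End Defs.

(* Raising tau raises the acceptance threshold c(tau) on the likelihood ratio l,
   so the theta-section of the acceptance set at tau2 is that at tau1 minus the
   band c(tau1) < l <= c(tau2).  On the removed band h_q <= c(tau2) h_u, while on
   the retained set h_q > c(tau2) h_u; hence removing the band strictly increases
   the ratio of h_q-mass to h_u-mass, and the posterior pi a / (pi a + (1-pi) b)
   is increasing in a / b.  Strictness needs both pieces to have positive Lebesgue
   measure, which follows from the continuity and the range of l by the
   intermediate value theorem. *)

From HB Require Import structures.
From mathcomp Require Import all_boot all_order all_algebra.
From mathcomp Require Import all_classical all_reals all_analysis.
From mathcomp Require Import ring lra measurable_realfun.
Import Order.TTheory GRing.Theory Num.Theory.
Import numFieldNormedType.Exports.
Local Open Scope classical_set_scope.
Local Open Scope ring_scope.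

Section threshold.
Context {R : realType}.
Variables (pi xq xu : R).
Hypothesis pi01 : 0 < pi < 1.

Lemma thresh_gt0 tau : - xu < tau -> tau < xq -> 0 < thresh pi xq xu tau.
Proof.
case/andP: pi01 => pi0 pi1 ltNxu_tau lt_tau_xq.
by apply: divr_gt0; apply: mulr_gt0; lra.
Qed.

Lemma thresh_lt tau1 tau2 : - xu < tau1 -> tau1 < tau2 -> tau2 < xq ->
  thresh pi xq xu tau1 < thresh pi xq xu tau2.
Proof.
case/andP: pi01 => pi0 pi1 lt1 lt12 lt2; rewrite -subr_gt0.
have -> : thresh pi xq xu tau2 - thresh pi xq xu tau1
    = (1 - pi) * (xu + xq) * (tau2 - tau1) / (pi * (xq - tau1) * (xq - tau2)).
  rewrite /thresh; field.
  by rewrite !subr_eq0; apply/and3P; split; apply/negP => /eqP; lra.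
by apply: divr_gt0; rewrite !mulr_gt0 //; lra.
Qed.

End threshold.

Lemma mixture_ratio_lt (R : realFieldType) (pi a b a' b' : R) :
  0 < pi < 1 -> 0 <= a -> 0 < b -> 0 <= a' -> 0 < b' -> a' * b < a * b' ->
  pi * a' / (pi * a' + (1 - pi) * b') < pi * a / (pi * a + (1 - pi) * b).
Proof.
move=> /andP[pi0 pi1] a0 b0 a'0 b'0 lt_cross.
have den_gt0 x y : 0 <= x -> 0 < y -> 0 < pi * x + (1 - pi) * y.
  by move=> x0 y0; apply: ltr_wpDl; [apply: mulr_ge0|apply: mulr_gt0]; lra.
rewrite -subr_gt0.
have -> : pi * a / (pi * a + (1 - pi) * b) - pi * a' / (pi * a' + (1 - pi) * b')
    = pi * (1 - pi) * (a * b' - a' * b)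
      / ((pi * a + (1 - pi) * b) * (pi * a' + (1 - pi) * b')).
  by field; rewrite !gt_eqF ?den_gt0.
by rewrite divr_gt0 ?mulr_gt0 ?den_gt0 // subr_gt0.
Qed.

Lemma continuous_pair_r {T U V : topologicalType} {f : T * U -> V} (x : T) :
  continuous f -> continuous (fun y => f (x, y)).
Proof.
move=> f_cont y; apply: (@continuous_comp _ _ _ (fun y => (x, y)) f).
  by apply: cvg_pair => /=; [exact: cvg_cst | exact: cvg_id].
exact: f_cont.
Qed.

Section lebesgue_positivity.
Context {R : realType}.
Local Notation mu := (@lebesgue_measure R).

Lemma Rintegral_gt0 (D : set R) (f : R -> R) :
  measurable D -> mu.-integrable D (EFin \o f) ->
  (forall x, D x -> 0 < f x) -> mu D != 0%E -> 0 < Rintegral mu D f.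
Proof.
move=> mD intf f_gt0 muD_neq0.
rewrite lt_neqAle Rintegral_ge0 ?andbT; last by move=> x /f_gt0/ltW.
apply/eqP => int0.
have int0E : (\int[mu]_(x in D) (EFin \o f) x = 0)%E.
  rewrite -(fineK (@integrable_fin_num _ _ _ mu D mD _ intf)).
  by rewrite -[fine _]/(Rintegral mu D f) -int0.
have absint0 : (\int[mu]_(x in D) `|(EFin \o f) x| = 0)%E.
  rewrite -int0E; apply: eq_integral => x /set_mem Dx /=.
  by rewrite ger0_norm // ltW // f_gt0.
have [N [mN N0 subN]] := (ae_eq_integral_abs mu mD (measurable_int mu intf)).1 absint0.
move/negP: muD_neq0; apply; rewrite -measure_le0 -N0 le_measure ?inE //.
by move=> x Dx; apply: subN => /(_ Dx) /= /eqP; rewrite eqe gt_eqF // f_gt0.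
Qed.

Lemma lt_Rintegral (D : set R) (f g : R -> R) :
  measurable D -> mu.-integrable D (EFin \o f) -> mu.-integrable D (EFin \o g) ->
  (forall x, D x -> f x < g x) -> mu D != 0%E ->
  Rintegral mu D f < Rintegral mu D g.
Proof.
move=> mD intf intg ltfg muD_neq0; rewrite -subr_gt0 -RintegralB //.
apply: Rintegral_gt0 => // [|x /ltfg]; last by rewrite subr_gt0.
have -> : EFin \o (g \- f) = ((EFin \o g) \- (EFin \o f))%E by [].
exact: integrableB.
Qed.

Lemma measure_neq0_of_itv {a b : R} {S : set R} :
  a < b -> `[a, b] `<=` S -> measurable S -> mu S != 0%E.
Proof.
move=> ltab abS mS; rewrite -measure_gt0.
apply: (@lt_le_trans _ _ (mu `[a, b])); last by rewrite le_measure ?inE.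
by rewrite lebesgue_measure_itv /= lte_fin ltab -EFinD lte_fin subr_gt0.
Qed.

End lebesgue_positivity.

Section upper_level_sets.
Context {R : realType} {L : R -> R}.
Hypotheses (L_cont : continuous L) (L_incr : {homo L : x y / x < y}).
Local Notation mu := (@lebesgue_measure R).

Let Lle : {mono L : x y / x <= y} := le_mono L_incr.
Let Llt : {mono L : x y / x < y} := leW_mono Lle.

Lemma measurable_upper_level c : measurable [set x | c < L x].
Proof.
apply: open_measurable; rewrite -[X in open X]/(L @^-1` [set y | c < y]).
by apply: open_comp => [x _|]; [exact: L_cont | exact: open_gt].
Qed.

Lemma upper_level_measure_neq0 c : (exists b, c < L b) ->
  mu [set x | c < L x] != 0%E.
Proof.
move=> [b Lb]; have b1 : b < b + 1 by rewrite ltrDl.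
apply: (measure_neq0_of_itv b1); last exact: measurable_upper_level.
by move=> x; rewrite /= in_itv /= => /andP[bx _]; rewrite (lt_le_trans Lb) ?Lle.
Qed.

Lemma level_band_measure_neq0 c1 c2 : c1 < c2 ->
  (exists a, L a < c1) -> (exists b, c2 < L b) ->
  mu ([set x | c1 < L x] `\` [set x | c2 < L x]) != 0%E.
Proof.
move=> c12 [a La] [b Lb].
have ab : a <= b by rewrite -Lle; lra.
have hit v : c1 <= v <= c2 -> exists x, L x = v.
  move=> /andP[c1v vc2].
  have [|x _ Lx] := @IVT _ L a b v ab (continuous_subspaceT L_cont).
    by rewrite ge_min le_max; apply/andP; split; apply/orP; [left|right]; lra.
  by exists x.
have [x1 Lx1] := hit ((2 * c1 + c2) / 3) ltac:(apply/andP; split; lra).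
have [x2 Lx2] := hit ((c1 + 2 * c2) / 3) ltac:(apply/andP; split; lra).
have x12 : x1 < x2 by rewrite -Llt Lx1 Lx2; lra.
apply: (measure_neq0_of_itv x12); last first.
  by apply: measurableD; exact: measurable_upper_level.
move=> x; rewrite /= in_itv /= => /andP[x1x xx2].
by rewrite -Lle Lx1 in x1x; rewrite -Lle Lx2 in xx2; split => /=; lra.
Qed.

End upper_level_sets.

Section posterior.
Context {R : realType}.
Local Notation mu := (@lebesgue_measure R).
Variables (pi : R) (f g : R -> R).
Hypotheses (pi01 : 0 < pi < 1) (f_ge0 : forall x, 0 <= f x)
  (g_gt0 : forall x, 0 < g x).
Hypotheses (f_int : mu.-integrable setT (EFin \o f))
  (g_int : mu.-integrable setT (EFin \o g)).

Definition posterior (D : set R) : R :=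
  pi * Rintegral mu D f / (pi * Rintegral mu D f + (1 - pi) * Rintegral mu D g).

Let int_f {D} : measurable D -> mu.-integrable D (EFin \o f).
Proof. by move=> mD; apply: integrableS f_int. Qed.

Let int_g {D} : measurable D -> mu.-integrable D (EFin \o g).
Proof. by move=> mD; apply: integrableS g_int. Qed.

Let int_cg {c D} : measurable D -> mu.-integrable D (EFin \o (fun x => c * g x)).
Proof.
move=> mD; have -> : EFin \o (fun x => c * g x) = (fun x => c%:E * (EFin \o g) x)%E.
  by apply/funext => x; rewrite /= EFinM.
exact: integrableZl (int_g mD).
Qed.

Lemma posterior_lt_of_split c D D' : measurable D -> measurable D' -> D' `<=` D ->
  mu D' != 0%E -> mu (D `\` D') != 0%E ->
  (forall x, D' x -> c * g x < f x) -> (forall x, (D `\` D') x -> f x <= c * g x) ->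
  posterior D < posterior D'.
Proof.
move=> mD mD' D'D muD' muE cg_lt_f f_le_cg.
have mE : measurable (D `\` D') by exact: measurableD.
have disj : [disjoint D' & D `\` D'] by apply/disj_setPS => x [? []].
rewrite /posterior -(setDUK D'D).
rewrite !Rintegral_setU ?int_f ?int_g ?setDUK //.
set a := Rintegral mu D' f; set b := Rintegral mu D' g.
set p := Rintegral mu (D `\` D') f; set q := Rintegral mu (D `\` D') g.
have b_gt0 : 0 < b by apply: Rintegral_gt0 => //; exact: int_g.
have q_gt0 : 0 < q by apply: Rintegral_gt0 => //; exact: int_g.
have cb_lt_a : c * b < a.
  by rewrite -RintegralZl ?int_g //; apply: lt_Rintegral; rewrite ?int_f ?int_cg.
have p_le_cq : p <= c * q.
  by rewrite -RintegralZl ?int_g //; apply: le_Rintegral; rewrite ?int_f ?int_cg.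
have a_ge0 : 0 <= a by apply: Rintegral_ge0 => x _; exact: f_ge0.
have p_ge0 : 0 <= p by apply: Rintegral_ge0 => x _; exact: f_ge0.
apply: mixture_ratio_lt; rewrite ?addr_ge0 ?addr_gt0 //.
have : p * b <= c * q * b by rewrite ler_wpM2r // ltW.
have : c * b * q < a * q by rewrite ltr_pM2r.
lra.
Qed.

End posterior.

Theorem mainTheorem3 (R : realType) (pi xq xu : R) (hq hu : R -> R -> R) :
  0 < pi < 1 ->
  0 < xq -> 0 < xu ->
  joint_density hq -> joint_density hu ->
  (* regularity: conditional sections given Theta = theta are integrable *)
  (forall th, (@lebesgue_measure R).-integrable setT (fun g => (hq th g)%:E)) ->
  (forall th, (@lebesgue_measure R).-integrable setT (fun g => (hu th g)%:E)) ->
  (* monotone likelihood ratio assumption *)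
  continuous (fun p : R * R => lr hq hu p.1 p.2) ->
  (forall g th1 th2, th1 < th2 -> lr hq hu th1 g < lr hq hu th2 g) ->
  (forall th g1 g2, g1 < g2 -> lr hq hu th g1 < lr hq hu th g2) ->
  (forall th (e : R), 0 < e -> exists g, lr hq hu th g < e) ->
  (forall th (M : R), exists g, M < lr hq hu th g) ->
  forall th tau1 tau2 : R,
    - xu < tau1 -> tau1 < tau2 -> tau2 < xq ->
    s1 hq hu pi xq xu th tau1 < s1 hq hu pi xq xu th tau2.
Proof.
move=> pi01 _ _ [hq_gt0 _] [hu_gt0 _] hq_int hu_int lr_cont _ lr_incr
  lr_small lr_large th tau1 tau2 lt1 lt12 lt2.
have L_cont : continuous (lr hq hu th) := continuous_pair_r th lr_cont.
have L_incr : {homo lr hq hu th : x y / x < y} := lr_incr th.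
have c1_gt0 : 0 < thresh pi xq xu tau1.
  by apply: thresh_gt0 => //; exact: lt_trans lt2.
have c12 : thresh pi xq xu tau1 < thresh pi xq xu tau2 by exact: thresh_lt.
have lt_lr c x : (c < lr hq hu th x) = (c * hu th x < hq th x).
  by rewrite /lr ltr_pdivlMr.
apply: (posterior_lt_of_split pi (hq th) (hu th) pi01 (fun x => ltW (hq_gt0 th x))
  (hu_gt0 th) (hq_int th) (hu_int th) (thresh pi xq xu tau2)).
- exact: measurable_upper_level.
- exact: measurable_upper_level.
- by move=> x /= /(lt_trans c12).
- exact: upper_level_measure_neq0 L_cont L_incr _ (lr_large th _).
- exact: level_band_measure_neq0 L_cont L_incr _ _ c12 (lr_small th _ c1_gt0)
    (lr_large th _).
- by move=> x; rewrite /accept_set /= lt_lr.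
- by move=> x [_]; rewrite /accept_set /= lt_lr => /negP; rewrite -leNgt.
Qed.
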